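(* The theory $T^\ast$ has the oak property.
   Context: The language consists of unary predicates $Q_0,Q_1,Q_2$ and function symbols $F_0$ (one-place), $F_1$ (two-place), $F_2,F_3$ (one-place). $T_0^+$ is the theory saying: $Q_0,Q_1,Q_2$ partition the universe; $F_0$ is a (total) function from $Q_1$ to $Q_0$; $F_1$ is a (total) function from $Q_2\times Q_0$ to $Q_1$; $F_2$ is a (total) function from $Q_0$ to $Q_2$; $F_3$ is a (total) function from $Q_2$ to $Q_0$; $F_0(F_1(z,x))=x$ for all $z\in Q_2,x\in Q_0$; and $F_3(F_2(x))=x$ for all $x\in Q_0$. $T^\ast$ denotes the (complete) model completion of $T_0^+$. Oak property: a complete theory $T$ satisfies oak as exhibited by a formula $\varphi(\bar z,\bar y,\bar x)$ if (c) $T\models\forall\bar z,\bar y_1,\bar y_2,\bar x\,[\varphi(\bar z,\bar y_1,\bar x)\wedge\varphi(\bar z,\bar y_2,\bar x)\rightarrow\bar y_1=\bar y_2]$, and for all cardinals $\lambda,\kappa$ there are, in the monster model of $T$, tuples $\bar b_\eta$ ($\eta\in{}^{\kappa>}\lambda$), $\bar c_\nu$ ($\nu\in{}^{\kappa}\lambda$) and $\bar a_i$ ($i<\kappa$) such that (a) if $\eta\vartriangleleft\nu\in{}^\kappa\lambda$ (i.e. $\eta$ is a proper initial segment of $\nu$) then $\models\varphi[\bar c_\nu,\bar b_\eta,\bar a_{\mathrm{lg}(\eta)}]$; (b) if $\eta\in{}^{\kappa>}\lambda$, $\eta^\frown\langle\alpha\rangle\vartriangleleft\nu_1\in{}^\kappa\lambda$,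 $\eta^\frown\langle\beta\rangle\vartriangleleft\nu_2\in{}^\kappa\lambda$, $\alpha\neq\beta$ and $i>\mathrm{lg}(\eta)$, then $\models\neg\exists\bar y\,[\varphi(\bar c_{\nu_1},\bar y,\bar a_i)\wedge\varphi(\bar c_{\nu_2},\bar y,\bar a_i)]$. (The monster model may be replaced by its $\mathrm{eq}$-expansion, i.e. $\bar y$ may range over classes of a definable equivalence relation.) $T$ has the oak property if this holds for some $\varphi$. *)

From Stdlib Require Import Arith.

Record structure := Structure {
  carrier :> Type;
  inh : carrier;                      (* first-order structures are nonempty *)
  sQ0 : carrier -> Prop;
  sQ1 : carrier -> Prop;
  sQ2 : carrier -> Prop;
  sF0 : carrier -> carrier;
  sF1 : carrier -> carrier -> carrier;
  sF2 : carrier -> carrier;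
  sF3 : carrier -> carrier }.

Inductive term : Type :=
  | tvar : nat -> term
  | tF0 : term -> term
  | tF1 : term -> term -> term
  | tF2 : term -> term
  | tF3 : term -> term.

Inductive form : Type :=
  | fEq : term -> term -> form
  | fQ0 : term -> form
  | fQ1 : term -> form
  | fQ2 : term -> form
  | fBot : form
  | fNot : form -> form
  | fAnd : form -> form -> form
  | fOr : form -> form -> form
  | fImp : form -> form -> form
  | fEx : nat -> form -> form
  | fAll : nat -> form -> form.

Fixpoint teval (M : structure) (e : nat -> M) (t : term) : M :=
  match t with
  | tvar n => e n
  | tF0 t => sF0 M (teval M e t)
  | tF1 t u => sF1 M (teval M e t) (teval M e u)
  | tF2 t => sF2 M (teval M e t)
  | tF3 t => sF3 M (teval M e t)
  end.

Definition upd (M : structure) (e : nat -> M) (n : nat) (x : M) : nat -> M :=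
  fun k => if Nat.eqb k n then x else e k.

Fixpoint sat (M : structure) (e : nat -> M) (f : form) : Prop :=
  match f with
  | fEq t u => teval M e t = teval M e u
  | fQ0 t => sQ0 M (teval M e t)
  | fQ1 t => sQ1 M (teval M e t)
  | fQ2 t => sQ2 M (teval M e t)
  | fBot => False
  | fNot g => ~ sat M e g
  | fAnd g h => sat M e g /\ sat M e h
  | fOr g h => sat M e g \/ sat M e h
  | fImp g h => sat M e g -> sat M e h
  | fEx n g => exists x : M, sat M (upd M e n x) g
  | fAll n g => forall x : M, sat M (upd M e n x) g
  end.

Fixpoint term_vars_in (ok : nat -> Prop) (t : term) : Prop :=
  match t with
  | tvar n => ok n
  | tF0 t | tF2 t | tF3 t => term_vars_in ok t
  | tF1 t u => term_vars_in ok t /\ term_vars_in ok u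
  end.

Fixpoint fv_in (ok : nat -> Prop) (f : form) : Prop :=
  match f with
  | fEq t u => term_vars_in ok t /\ term_vars_in ok u
  | fQ0 t | fQ1 t | fQ2 t => term_vars_in ok t
  | fBot => True
  | fNot g => fv_in ok g
  | fAnd g h | fOr g h | fImp g h => fv_in ok g /\ fv_in ok h
  | fEx n g | fAll n g => fv_in (fun k => k = n \/ ok k) g
  end.

Definition fv_below (n : nat) (f : form) : Prop := fv_in (fun k => k < n) f.
Definition sentence (f : form) : Prop := fv_in (fun _ => False) f.

Definition theory := form -> Prop.

Definition models (T : theory) (M : structure) : Prop :=
  forall f, T f -> forall e : nat -> M, sat M e f.

Definition complete (T : theory) : Prop :=
  (exists M, models T M) /\
  forall (M N : structure) (eM : nat -> M) (eN : nat -> N) (f : form),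
    models T M -> models T N -> sentence f -> (sat M eM f <-> sat N eN f).

Definition is_T0plus (M : structure) : Prop :=
  (forall x : M, sQ0 M x \/ sQ1 M x \/ sQ2 M x) /\
  (forall x : M, ~ (sQ0 M x /\ sQ1 M x)) /\
  (forall x : M, ~ (sQ0 M x /\ sQ2 M x)) /\
  (forall x : M, ~ (sQ1 M x /\ sQ2 M x)) /\
  (forall x : M, sQ1 M x -> sQ0 M (sF0 M x)) /\
  (forall z x : M, sQ2 M z -> sQ0 M x -> sQ1 M (sF1 M z x)) /\
  (forall x : M, sQ0 M x -> sQ2 M (sF2 M x)) /\
  (forall z : M, sQ2 M z -> sQ0 M (sF3 M z)) /\
  (forall z x : M, sQ2 M z -> sQ0 M x -> sF0 M (sF1 M z x) = x) /\
  (forall x : M, sQ0 M x -> sF3 M (sF2 M x) = x).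

Definition is_embedding (M N : structure) (h : M -> N) : Prop :=
  (forall x y : M, h x = h y -> x = y) /\
  (forall x : M, sQ0 M x <-> sQ0 N (h x)) /\
  (forall x : M, sQ1 M x <-> sQ1 N (h x)) /\
  (forall x : M, sQ2 M x <-> sQ2 N (h x)) /\
  (forall x : M, h (sF0 M x) = sF0 N (h x)) /\
  (forall x y : M, h (sF1 M x y) = sF1 N (h x) (h y)) /\
  (forall x : M, h (sF2 M x) = sF2 N (h x)) /\
  (forall x : M, h (sF3 M x) = sF3 N (h x)).

(** * Model completion (Chang-Keisler): T* |- T0+, every model of T0+ embeds
    in a model of T*, and for every model M of T0+, T* together with the
    diagram of M is complete (formulas with parameters from M are decided
    the same way in all models of T* extending M). *)
Definition model_completion_of_T0plus (Ts : theory) : Prop :=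
  (forall M, models Ts M -> is_T0plus M) /\
  (forall M, is_T0plus M -> exists (N : structure) (h : M -> N), models Ts N /\ is_embedding M N h) /\
  (forall (M : structure), is_T0plus M ->
     forall (N1 N2 : structure) (h1 : M -> N1) (h2 : M -> N2),
       models Ts N1 -> models Ts N2 -> is_embedding M N1 h1 -> is_embedding M N2 h2 ->
       forall (f : form) (e : nat -> M),
         sat N1 (fun k => h1 (e k)) f <-> sat N2 (fun k => h2 (e k)) f).

(** A tuple of length n in M is represented by a
    function nat -> M of which only the first n values matter.  For a formula
    phi(zbar, ybar, xbar) with |zbar| = nz, |ybar| = ny, |xbar| = nx, variables
    0..nz-1 are zbar, nz..nz+ny-1 are ybar, nz+ny..nz+ny+nx-1 are xbar. *)
Definition join {A : Type} (n : nat) (u v : nat -> A) : nat -> A :=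
  fun k => if Nat.ltb k n then u k else v (k - n).

Definition env3 {A : Type} (nz ny : nat) (z y x : nat -> A) : nat -> A :=
  join nz z (join ny y x).

(** A cardinal kappa is given as a type K with a strict
    well-order ltK of order type kappa (an initial ordinal: no proper initial
    segment maps onto K); a cardinal lambda is given as a type L. *)
Definition is_cardinal_order (K : Type) (ltK : K -> K -> Prop) : Prop :=
  well_founded ltK /\
  (forall a b c, ltK a b -> ltK b c -> ltK a c) /\
  (forall a b, ltK a b \/ a = b \/ ltK b a) /\
  (forall a, ~ ltK a a) /\
  (forall a, ~ exists f : {b : K | ltK b a} -> K, forall k, exists s, f s = k).

(** ^{kappa>}lambda : sequences of length alpha < kappa with values in lambda *)
Definition seq_lt (K : Type) (ltK : K -> K -> Prop) (L : Type) : Type :=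
  {alpha : K & {b : K | ltK b alpha} -> L}.

Definition lg {K ltK L} (eta : seq_lt K ltK L) : K := projT1 eta.

Definition initseg {K ltK L} (eta : seq_lt K ltK L) (nu : K -> L) : Prop :=
  forall (b : K) (h : ltK b (lg eta)), projT2 eta (exist _ b h) = nu b.

(** * The oak property, as exhibited by phi(zbar, ybar, xbar), where ybar may
    range over classes of a 0-definable equivalence relation E(ybar, ybar')
    (i.e. we work in T^eq; taking E to be equality of ny-tuples gives the
    home-sort case).  "In the monster model" is rendered as "in some model
    of T" (equivalent for complete T). *)
Definition oak_by (T : theory) (nz ny nx : nat) (phi E : form) : Prop :=
  fv_below (nz + ny + nx) phi /\ fv_below (ny + ny) E /\
  (forall M, models T M ->
     (forall y : nat -> M, sat M (join ny y y) E) /\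
     (forall y1 y2 : nat -> M, sat M (join ny y1 y2) E -> sat M (join ny y2 y1) E) /\
     (forall y1 y2 y3 : nat -> M, sat M (join ny y1 y2) E -> sat M (join ny y2 y3) E ->
                                  sat M (join ny y1 y3) E)) /\
  (* phi is E-invariant in ybar, so it is a formula of T^eq *)
  (forall M, models T M -> forall z y1 y2 x : nat -> M,
     sat M (join ny y1 y2) E ->
     (sat M (env3 nz ny z y1 x) phi <-> sat M (env3 nz ny z y2 x) phi)) /\
  (forall M, models T M -> forall z y1 y2 x : nat -> M,
     sat M (env3 nz ny z y1 x) phi -> sat M (env3 nz ny z y2 x) phi ->
     sat M (join ny y1 y2) E) /\
  (forall (K : Type) (ltK : K -> K -> Prop) (L : Type),
     is_cardinal_order K ltK ->
     exists (N : structure), models T N /\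
     exists (b : seq_lt K ltK L -> nat -> N) (c : (K -> L) -> nat -> N) (a : K -> nat -> N),
       (forall (eta : seq_lt K ltK L) nu, initseg eta nu ->
          sat N (env3 nz ny (c nu) (b eta) (a (lg eta))) phi) /\
       (forall (eta : seq_lt K ltK L) nu1 nu2 (i : K),
          initseg eta nu1 -> initseg eta nu2 -> nu1 (lg eta) <> nu2 (lg eta) ->
          ltK (lg eta) i ->
          ~ exists y : nat -> N,
              sat N (env3 nz ny (c nu1) y (a i)) phi /\
              sat N (env3 nz ny (c nu2) y (a i)) phi)).

Definition has_oak (T : theory) : Prop :=
  exists nz ny nx phi E, oak_by T nz ny nx phi E.

(** Take [phi(z, y, x) := F1(z, x) = y]; it is functional in [y], which is
    condition (c).  For (a) and (b) it suffices to find, in some model of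
    [T0+], points [c_nu] of [Q2] (one per branch [nu]) and [a_k] of [Q0]
    (one per level [k < kappa]) such that [F1(c_nu, a_k)] depends only on
    [nu] restricted to [k] and separates branches that differ below [k]:
    let [Q1] consist of codes of such restrictions.  Embedding this model
    into a model of [T*] keeps both properties, since embeddings are
    injective and commute with [F1]. *)
From Stdlib Require Import Lia FunctionalExtensionality PropExtensionality.

Definition phi_F1 : form := fEq (tF1 (tvar 0) (tvar 2)) (tvar 1).
Definition eq_form : form := fEq (tvar 0) (tvar 1).

Lemma sat_phi_F1 (M : structure) (z y x : nat -> M) :
  sat M (env3 1 1 z y x) phi_F1 <-> sF1 M (z 0) (x 0) = y 0.
Proof. reflexivity. Qed.

Lemma sat_eq_form (M : structure) (y1 y2 : nat -> M) :
  sat M (join 1 y1 y2) eq_form <-> y1 0 = y2 0.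
Proof. reflexivity. Qed.

Definition F1_codes_tree (N : structure) (K : Type) (ltK : K -> K -> Prop) (L : Type)
  : Prop :=
  exists (b : seq_lt K ltK L -> N) (c : (K -> L) -> N) (a : K -> N),
    (forall eta nu, initseg eta nu -> sF1 N (c nu) (a (lg eta)) = b eta) /\
    (forall nu1 nu2 k i, ltK k i -> nu1 k <> nu2 k ->
       sF1 N (c nu1) (a i) <> sF1 N (c nu2) (a i)).

Lemma F1_codes_tree_embedding (M N : structure) (h : M -> N)
    (K : Type) (ltK : K -> K -> Prop) (L : Type) :
  is_embedding M N h -> F1_codes_tree M K ltK L -> F1_codes_tree N K ltK L.
Proof.
  intros [h_inj [_ [_ [_ [_ [h_F1 _]]]]]] [b [c [a [Hinit Hsep]]]].
  exists (fun eta => h (b eta)), (fun nu => h (c nu)), (fun k => h (a k)).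
  split.
  - intros eta nu Hnu. rewrite <- h_F1. now rewrite Hinit.
  - intros nu1 nu2 k i Hki Hk Heq. rewrite <- !h_F1 in Heq.
    exact (Hsep nu1 nu2 k i Hki Hk (h_inj _ _ Heq)).
Qed.

Lemma oak_by_F1 (T : theory) :
  (forall (K : Type) (ltK : K -> K -> Prop) (L : Type), is_cardinal_order K ltK ->
     exists N, models T N /\ F1_codes_tree N K ltK L) ->
  oak_by T 1 1 1 phi_F1 eq_form.
Proof.
  intros Htree.
  unfold oak_by, fv_below.
  split; [simpl; lia|]. split; [simpl; lia|].
  split; [intros M _; repeat split; intros; rewrite ?sat_eq_form in *; congruence|].
  split; [intros M _ z y1 y2 x; rewrite sat_eq_form, !sat_phi_F1; intros ->; tauto|].
  split; [intros M _ z y1 y2 x; rewrite sat_eq_form, !sat_phi_F1; congruence|].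
  intros K ltK L HK.
  destruct (Htree K ltK L HK) as [N [HN [b [c [a [Hinit Hsep]]]]]].
  exists N; split; [exact HN|].
  exists (fun eta _ => b eta), (fun nu _ => c nu), (fun k _ => a k).
  split.
  - intros eta nu Hnu. apply sat_phi_F1. exact (Hinit eta nu Hnu).
  - intros eta nu1 nu2 i _ _ Hne Hlt [y [H1 H2]].
    apply sat_phi_F1 in H1, H2.
    apply (Hsep nu1 nu2 (lg eta) i Hlt Hne). congruence.
Qed.

Section TreeModel.

Variables (K L : Type) (ltK : K -> K -> Prop).

(** [pt0 (Some k)] is the level [a_k]; [pt0 None] is a junk value.  Points of
    [Q1] and [Q2] store their [F0]- resp. [F3]-image in [x], and a relation:
    the graph of a branch for [c_nu], its restriction below [k] for
    [F1(c_nu, a_k)]. *)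
Inductive tree_point : Type :=
  | pt0 (x : option K)
  | pt1 (x : option K) (R : K -> L -> Prop)
  | pt2 (x : option K) (R : K -> L -> Prop).

Definition graph (nu : K -> L) : K -> L -> Prop := fun k l => nu k = l.

Definition segment_graph (eta : seq_lt K ltK L) : K -> L -> Prop :=
  fun k l => exists Hk : ltK k (lg eta), projT2 eta (exist _ k Hk) = l.

Definition restrict (x : option K) (R : K -> L -> Prop) : K -> L -> Prop :=
  fun k l => match x with Some i => ltK k i | None => True end /\ R k l.

Definition tree_Q0 (u : tree_point) : Prop :=
  match u with pt0 _ => True | _ => False end.
Definition tree_Q1 (u : tree_point) : Prop :=
  match u with pt1 _ _ => True | _ => False end.
Definition tree_Q2 (u : tree_point) : Prop :=
  match u with pt2 _ _ => True | _ => False end.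

Definition tree_F0 (u : tree_point) : tree_point :=
  match u with pt1 x _ => pt0 x | _ => pt0 None end.
Definition tree_F1 (u v : tree_point) : tree_point :=
  match u, v with
  | pt2 _ R, pt0 x => pt1 x (restrict x R)
  | _, _ => pt0 None
  end.
Definition tree_F2 (u : tree_point) : tree_point :=
  match u with pt0 x => pt2 x (fun _ _ => False) | _ => pt0 None end.
Definition tree_F3 (u : tree_point) : tree_point :=
  match u with pt2 x _ => pt0 x | _ => pt0 None end.

Definition tree_model : structure :=
  Structure tree_point (pt0 None) tree_Q0 tree_Q1 tree_Q2
    tree_F0 tree_F1 tree_F2 tree_F3.

Lemma tree_model_T0plus : is_T0plus tree_model.
Proof.
  unfold is_T0plus; simpl.
  repeat split;
    repeat (let u := fresh "u" in intro u; destruct u); simpl; tauto.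
Qed.

Lemma restrict_graph_initseg (eta : seq_lt K ltK L) (nu : K -> L) :
  initseg eta nu -> restrict (Some (lg eta)) (graph nu) = segment_graph eta.
Proof.
  intros Hnu.
  apply functional_extensionality; intros k.
  apply functional_extensionality; intros l.
  apply propositional_extensionality; unfold restrict, graph, segment_graph.
  split.
  - intros [Hk <-]. exists Hk. apply Hnu.
  - intros [Hk <-]. split; [exact Hk|]. symmetry; apply Hnu.
Qed.

Lemma restrict_graph_separates (nu1 nu2 : K -> L) (k i : K) :
  ltK k i -> nu1 k <> nu2 k ->
  restrict (Some i) (graph nu1) <> restrict (Some i) (graph nu2).
Proof.
  intros Hki Hk Heq.
  assert (H : restrict (Some i) (graph nu2) k (nu1 k)).
  { rewrite <- Heq. split; [exact Hki | reflexivity]. }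
  destruct H as [_ H]. exact (Hk (eq_sym H)).
Qed.

Lemma tree_model_codes_tree : F1_codes_tree tree_model K ltK L.
Proof.
  exists (fun eta => pt1 (Some (lg eta)) (segment_graph eta)),
         (fun nu => pt2 None (graph nu)),
         (fun k => pt0 (Some k)).
  split; simpl.
  - intros eta nu Hnu. now rewrite restrict_graph_initseg.
  - intros nu1 nu2 k i Hki Hk Heq. injection Heq as Heq.
    exact (restrict_graph_separates nu1 nu2 k i Hki Hk Heq).
Qed.

End TreeModel.

Theorem claim2p11 (Tstar : theory) :
  model_completion_of_T0plus Tstar -> complete Tstar -> has_oak Tstar.
Proof.
  intros [_ [Hembed _]] _.
  exists 1, 1, 1, phi_F1, eq_form.
  apply oak_by_F1. intros K ltK L _.
  destruct (Hembed (tree_model K L ltK) (tree_model_T0plus K L ltK))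
    as [N [h [HN Hh]]].
  exists N; split; [exact HN|].
  exact (F1_codes_tree_embedding _ _ h K ltK L Hh (tree_model_codes_tree K L ltK)).
Qed.
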